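(* Let $\delta>0$. If the distribution function $F$ of the conductances varies regularly at zero with index $\gamma>0$, then $\mathbb P$-a.s. for all $n$ large enough $\lambda_1^{(n)}\le n^{-\frac1{2\gamma}+\delta}$. If moreover $F(a)=a^\gamma$ for all $a\in[0,1]$, then for every $\epsilon>0$, $\mathbb P$-a.s. for all $n$ large enough $\lambda_1^{(n)}\le 2d\, n^{-\frac1{2\gamma}}\big((2+\epsilon)\log\log n\big)^{\frac1{2d\gamma}}$.
   Context: Let $d\ge 2$, $\mathfrak E_d$ the nearest-neighbour edges of $\mathbb Z^d$, $x\sim y$ if $|x-y|_1=1$. Conductances $(w_e)_{e\in\mathfrak E_d}$ are i.i.d. $(0,\infty)$-valued with law $\mathbb P$, and $F(u)=\mathbb P[w\le u]$. $B_n=[-n,n]^d\cap\mathbb Z^d$. $\mathcal E^{\boldsymbol w}(f)=\frac12\sum_{x}\sum_{y\sim x}w_{xy}(f(x)-f(y))^2$ and $\lambda_1^{(n)}=\inf\{\mathcal E^{\boldsymbol w}(f): f\in\ell^2(\mathbb Z^d)\text{ real},\ \mathrm{supp}\,f\subseteq B_n,\ \|f\|_2=1\}$ (principal Dirichlet eigenvalue of $-\mathcal L_{\boldsymbol w}$, $(\mathcal L_{\boldsymbol w}f)(x)=\sum_{y\sim x}w_{xy}(f(y)-f(x))$, in $B_n$). $F$ varies regularly at zero with index $\gamma$ if $F(u)=u^\gamma L(u)$ with $L(Cu)/L(u)\to1$ as $u\to0$ for all $C>0$. *)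

From Stdlib Require Import Reals ZArith List.
Import ListNotations.
Open Scope R_scope.

(* A point of Z^d is a list of d integers (the length is checked where needed). *)
Definition pt := list Z.

Fixpoint zrange_aux (a : Z) (k : nat) : list Z :=
  match k with O => [] | S k' => a :: zrange_aux (a + 1)%Z k' end.

Definition zrange (n : nat) : list Z := zrange_aux (- Z.of_nat n)%Z (2 * n + 1).

Fixpoint box (d n : nat) : list pt :=
  match d with
  | O => [ [] ]
  | S d' => flat_map (fun k => map (cons k) (box d' n)) (zrange n)
  end.

Definition in_box (d n : nat) (x : pt) : Prop :=
  length x = d /\ Forall (fun k => (- Z.of_nat n <= k <= Z.of_nat n)%Z) x.

Fixpoint incr (x : pt) (i : nat) : pt :=
  match x, i with
  | [], _ => []
  | k :: x', O => (k + 1)%Z :: x'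
  | k :: x', S i' => k :: incr x' i'
  end.

Definition sumR {A} (g : A -> R) (l : list A) : R := fold_right Rplus 0 (map g l).

(* Edges of Z^d are indexed by pairs (x, i), x in Z^d, i < d, standing for
   the edge {x, x + e_i}.  A conductance configuration is w : pt -> nat -> R. *)
Definition is_edge (d : nat) (e : pt * nat) : Prop :=
  length (fst e) = d /\ (snd e < d)%nat.

(* Dirichlet energy of f (supported in B_n):
   1/2 sum_x sum_{y~x} w_xy (f x - f y)^2 = sum over edges {x,x+e_i}.
   Every edge with an endpoint in B_n has its base point x in B_{n+1},
   so summing over x in B_{n+1} loses nothing. *)
Definition energy (d n : nat) (w : pt -> nat -> R) (f : pt -> R) : R :=
  sumR (fun x => sumR (fun i => w x i * (f (incr x i) - f x) ^ 2) (seq 0 d))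
       (box d (S n)).

Definition rayleigh_set (d n : nat) (w : pt -> nat -> R) (r : R) : Prop :=
  exists f : pt -> R,
    (forall x, ~ in_box d n x -> f x = 0) /\
    sumR (fun x => f x ^ 2) (box d n) = 1 /\
    r = energy d n w f.

Definition is_inf (S : R -> Prop) (m : R) : Prop :=
  (forall x, S x -> m <= x) /\ (forall m', (forall x, S x -> m' <= x) -> m' <= m).

Definition lambda1_le (d n : nat) (w : pt -> nat -> R) (b : R) : Prop :=
  forall l, is_inf (rayleigh_set d n w) l -> l <= b.

Record prob_space := {
  Omega : Type;
  event : (Omega -> Prop) -> Prop;
  event_full : event (fun _ => True);
  event_compl : forall A, event A -> event (fun o => ~ A o);
  event_cunion : forall A : nat -> Omega -> Prop,
      (forall k, event (A k)) -> event (fun o => exists k, A k o);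
  Pr : (Omega -> Prop) -> R;
  Pr_nonneg : forall A, event A -> 0 <= Pr A;
  Pr_full : Pr (fun _ => True) = 1;
  Pr_sigma_add : forall A : nat -> Omega -> Prop,
      (forall k, event (A k)) ->
      (forall j k o, j <> k -> A j o -> A k o -> False) ->
      infinite_sum (fun k => Pr (A k)) (Pr (fun o => exists k, A k o))
}.

Definition almost_surely (P : prob_space) (Q : Omega P -> Prop) : Prop :=
  exists E, event P E /\ Pr P E = 1 /\ forall o, E o -> Q o.

(* (w_e)_e are i.i.d., (0,oo)-valued, with distribution function F:
   for every finite family of distinct edges the joint distribution
   function is the product of F. *)
Definition iid_conductances (d : nat) (P : prob_space)
    (W : pt -> nat -> Omega P -> R) (F : R -> R) : Prop :=
  (forall x i o, is_edge d (x, i) -> 0 < W x i o) /\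
  (forall x i u, is_edge d (x, i) -> event P (fun o => W x i o <= u)) /\
  (forall (l : list (pt * nat)) (u : pt * nat -> R),
      NoDup l -> Forall (is_edge d) l ->
      Pr P (fun o => Forall (fun e => W (fst e) (snd e) o <= u e) l)
      = fold_right Rmult 1 (map (fun e => F (u e)) l)).

Definition regularly_varying_at_0 (F : R -> R) (gamma : R) : Prop :=
  exists L : R -> R,
    (forall u, 0 < u -> F u = Rpower u gamma * L u) /\
    (forall C, 0 < C -> forall eps, 0 < eps -> exists dl, 0 < dl /\
       forall u, 0 < u < dl -> Rabs (L (C * u) / L u - 1) < eps).

(* Stars (the 2d edges at a site) of distinct even sites of B_n are edge-disjoint,
   so by independence the probability that no even site of B_n has its whole star
   below t is (1 - F(t)^(2d))^(#even sites) <= exp (- F(t)^(2d) n^d).  When some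
   site has such a star, the indicator of that site is a test function of energy at
   most 2 d t, so lambda_1^(n) <= 2 d t.  Thresholds t_n with F(t_n)^(2d) n^d a bit
   above (1 + r) ln n make Borel-Cantelli apply: along all n, via a Potter bound
   F(u) >= c u^(gamma + eta), in the regularly varying case; along dyadic n = 2^j,
   with a ln ln n correction, when F(a) = a^gamma. *)
From Stdlib Require Import Reals ZArith List Lra Lia Permutation
  FunctionalExtensionality PropExtensionality Classical.
Import ListNotations.
Open Scope R_scope.

Section Probability.
Variable P : prob_space.
Notation event := (event P).
Notation Pr := (Pr P).

Lemma pred_ext (A B : Omega P -> Prop) : (forall o, A o <-> B o) -> A = B.
Proof.
  intro h; apply functional_extensionality; intro o; apply propositional_extensionality; auto.
Qed.

Lemma event_ext A B : (forall o, A o <-> B o) -> event A -> event B.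
Proof. intro h; rewrite (pred_ext A B h); auto. Qed.

Lemma Pr_ext A B : (forall o, A o <-> B o) -> Pr A = Pr B.
Proof. intro h; rewrite (pred_ext A B h); auto. Qed.

Lemma event_empty : event (fun _ => False).
Proof. apply (event_ext (fun _ => ~ True)); [tauto | apply event_compl, event_full]. Qed.

(* Sigma-additivity for the empty event repeated countably often: the partial
   sums (n + 1) c of its probability c must converge to c, forcing c = 0. *)
Lemma Pr_empty : Pr (fun _ => False) = 0.
Proof.
  set (c := Pr (fun _ => False)).
  assert (hsum := Pr_sigma_add P (fun _ _ => False) (fun _ => event_empty)
                    (fun _ _ _ _ h _ => h)).
  rewrite (Pr_ext _ (fun _ => False)) in hsum by (intro o; split; [intros [_ []] | tauto]).
  fold c in hsum.
  assert (hpartial : forall n, sum_f_R0 (fun _ => c) n = INR (S n) * c).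
  { induction n as [|n IH]; [simpl; ring | rewrite tech5, IH, (S_INR (S n)); ring]. }
  destruct (Req_dec c 0) as [h | hc]; auto.
  destruct (hsum (Rabs c)) as [N hN]; [apply Rabs_pos_lt; auto |].
  specialize (hN (S N) ltac:(lia)). unfold R_dist in hN.
  rewrite hpartial in hN.
  replace (INR (S (S N)) * c - c) with (INR (S N) * c) in hN by (rewrite (S_INR (S N)); ring).
  rewrite Rabs_mult, Rabs_right in hN by (apply Rle_ge, pos_INR).
  assert (1 <= INR (S N)) by (rewrite S_INR; pose proof (pos_INR N); lra).
  assert (0 < Rabs c) by (apply Rabs_pos_lt; auto).
  nra.
Qed.

Definition two_events (A B : Omega P -> Prop) (k : nat) : Omega P -> Prop :=
  match k with O => A | 1%nat => B | _ => fun _ => False end.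

Lemma two_events_union A B o : (exists k, two_events A B k o) <-> A o \/ B o.
Proof.
  split; [intros [[|[|k]] h]; simpl in h; tauto |].
  intros [h | h]; [exists 0%nat | exists 1%nat]; exact h.
Qed.

Lemma event_two_events A B : event A -> event B -> forall k, event (two_events A B k).
Proof. intros hA hB [|[|k]]; simpl; auto using event_empty. Qed.

Lemma event_or A B : event A -> event B -> event (fun o => A o \/ B o).
Proof.
  intros hA hB. apply (event_ext _ _ (two_events_union A B)).
  apply event_cunion, event_two_events; auto.
Qed.

Lemma event_and A B : event A -> event B -> event (fun o => A o /\ B o).
Proof.
  intros hA hB. apply (event_ext (fun o => ~ (~ A o \/ ~ B o))); [intro; tauto |].
  apply event_compl, event_or; apply event_compl; auto.
Qed.

Lemma event_Forall {X} (Q : X -> Omega P -> Prop) (l : list X) :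
  (forall x, In x l -> event (Q x)) -> event (fun o => Forall (fun x => Q x o) l).
Proof.
  induction l as [|a l IH]; intro h.
  - apply (event_ext (fun _ => True)); [split; auto | apply event_full].
  - apply (event_ext (fun o => Q a o /\ Forall (fun x => Q x o) l)).
    { intro o; split; [intros []; constructor; auto | intro hf; inversion hf; auto]. }
    apply event_and; [apply h; left | apply IH; intros; apply h; right]; auto.
Qed.

Lemma Pr_or_disjoint A B : event A -> event B -> (forall o, A o -> B o -> False) ->
  Pr (fun o => A o \/ B o) = Pr A + Pr B.
Proof.
  intros hA hB hAB.
  assert (hdisj : forall j k o, j <> k -> two_events A B j o -> two_events A B k o -> False).
  { intros [|[|j]] [|[|k]] o hjk; simpl; try tauto; try lia; eauto. }
  assert (hsum := Pr_sigma_add P _ (event_two_events A B hA hB) hdisj).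
  rewrite (Pr_ext _ _ (two_events_union A B)) in hsum.
  apply (uniqueness_sum _ _ _ hsum).
  intros eps heps. exists 1%nat. intros n hn. unfold R_dist.
  replace (sum_f_R0 (fun k => Pr (two_events A B k)) n) with (Pr A + Pr B).
  { rewrite Rminus_diag, Rabs_R0; auto. }
  induction n as [|[|n] IH]; [lia | simpl; ring |].
  rewrite tech5, <- IH by lia. simpl. rewrite Pr_empty. ring.
Qed.

Lemma Pr_split A B : event A -> event B ->
  Pr A = Pr (fun o => A o /\ B o) + Pr (fun o => A o /\ ~ B o).
Proof.
  intros hA hB. rewrite <- Pr_or_disjoint.
  - apply Pr_ext; intro o; tauto.
  - apply event_and; auto.
  - apply event_and; auto using event_compl.
  - intro o; tauto.
Qed.

Lemma Pr_le A B : event A -> event B -> (forall o, A o -> B o) -> Pr A <= Pr B.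
Proof.
  intros hA hB hAB. rewrite (Pr_split B A hB hA).
  rewrite (Pr_ext (fun o => B o /\ A o) A) by (intro o; split; [tauto | auto]).
  assert (0 <= Pr (fun o => B o /\ ~ A o)) by (apply Pr_nonneg, event_and; auto using event_compl).
  lra.
Qed.

Lemma Pr_le_1 A : event A -> Pr A <= 1.
Proof. intro hA. rewrite <- (Pr_full P). apply Pr_le; auto using event_full. Qed.

Lemma Pr_compl A : event A -> Pr (fun o => ~ A o) = 1 - Pr A.
Proof.
  intro hA. rewrite <- (Pr_full P), (Pr_split _ A (event_full P) hA).
  rewrite (Pr_ext (fun o => True /\ A o) A) by (intro; tauto).
  rewrite (Pr_ext (fun o => True /\ ~ A o) (fun o => ~ A o)) by (intro; tauto).
  ring.
Qed.

Lemma event_none_before (B : nat -> Omega P -> Prop) (hB : forall k, event (B k)) (j : nat) :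
  event (fun o => forall i, (i < j)%nat -> ~ B i o).
Proof.
  induction j as [|j IH].
  - apply (event_ext (fun _ => True)); [intro; split; auto; intros; lia | apply event_full].
  - apply (event_ext (fun o => (forall i, (i < j)%nat -> ~ B i o) /\ ~ B j o)).
    + intro o; split.
      * intros [h1 h2] i hi. destruct (Nat.eq_dec i j); [subst | apply h1; lia]; auto.
      * intro h; split; auto.
    + apply event_and, event_compl; auto.
Qed.

Lemma first_occurrence (B : nat -> Omega P -> Prop) o :
  (exists j, B j o) -> exists j, B j o /\ forall i, (i < j)%nat -> ~ B i o.
Proof.
  intros [j hj]. revert hj.
  induction j as [j IH] using (well_founded_induction lt_wf). intro hj.
  destruct (classic (exists i, (i < j)%nat /\ B i o)) as [[i [hi hBi]] | hnone].
  - exact (IH i hi hBi).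
  - exists j. split; auto. intros i hi hBi. apply hnone; eauto.
Qed.

Lemma infinite_sum_le (a : nat -> R) l c :
  infinite_sum a l -> (forall M, sum_f_R0 a M <= c) -> l <= c.
Proof.
  intros hl hc. apply Rnot_lt_le. intro hlt.
  destruct (hl (l - c)) as [N hN]; [lra |].
  specialize (hN N (le_n _)). specialize (hc N). unfold R_dist in hN.
  rewrite Rabs_minus_sym, Rabs_right in hN by lra. lra.
Qed.

(* Countable subadditivity, via the disjointification
   [D j = B j minus (B 0 \/ ... \/ B (j-1))]. *)
Lemma Pr_union_le (B : nat -> Omega P -> Prop) (hB : forall k, event (B k)) c :
  (forall M, sum_f_R0 (fun j => Pr (B j)) M <= c) -> Pr (fun o => exists j, B j o) <= c.
Proof.
  intro hc.
  set (D := fun j o => B j o /\ forall i, (i < j)%nat -> ~ B i o).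
  assert (hD : forall j, event (D j)) by (intro j; apply event_and; auto using event_none_before).
  assert (hdisj : forall j k o, j <> k -> D j o -> D k o -> False).
  { intros j k o hjk [h1 h2] [h3 h4].
    destruct (Nat.lt_total j k) as [h | [h | h]]; [exact (h4 j h h1) | exact (hjk h) | exact (h2 k h h3)]. }
  assert (hsum := Pr_sigma_add P D hD hdisj).
  rewrite (Pr_ext (fun o => exists k, D k o) (fun o => exists j, B j o)) in hsum.
  - apply (infinite_sum_le _ _ _ hsum). intro M.
    eapply Rle_trans; [| apply (hc M)].
    apply sum_Rle. intros n _. apply Pr_le; auto. intros o [h _]; auto.
  - intro o; split; [intros [k [h _]]; eauto | apply first_occurrence].
Qed.

Lemma borel_cantelli (B : nat -> Omega P -> Prop) (hB : forall k, event (B k)) :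
  (forall eta, 0 < eta -> exists N, forall M, sum_f_R0 (fun j => Pr (B (N + j)%nat)) M <= eta) ->
  almost_surely P (fun o => exists K, forall k, (K <= k)%nat -> ~ B k o).
Proof.
  intro htail.
  set (E := fun o => exists K, forall k, (K <= k)%nat -> ~ B k o).
  assert (hshift : forall o N, (exists j, B (N + j)%nat o) <-> exists k, (N <= k)%nat /\ B k o).
  { intros o N; split.
    - intros [j hj]; exists (N + j)%nat; split; auto; lia.
    - intros [k [hk hBk]]; exists (k - N)%nat. replace (N + (k - N))%nat with k by lia; auto. }
  assert (hE : event E).
  { apply (event_ext (fun o => exists N, ~ exists j, B (N + j)%nat o)).
    - intro o; unfold E; split; intros [N hN]; exists N.
      + intros k hk hBk. apply hN, hshift; eauto.
      + intros hj. apply hshift in hj. destruct hj as [k [hk hBk]]. exact (hN k hk hBk).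
    - apply event_cunion. intro N. apply event_compl, event_cunion. auto. }
  exists E. split; [exact hE | split; [| auto]].
  assert (hnotE : Pr (fun o => ~ E o) <= 0).
  { apply Rnot_lt_le. intro hpos.
    destruct (htail (Pr (fun o => ~ E o) / 2)) as [N hN]; [lra |].
    assert (Pr (fun o => ~ E o) <= Pr (fun o => exists j, B (N + j)%nat o)).
    { apply Pr_le; [apply event_compl; auto | apply event_cunion; auto |].
      intros o ho. apply NNPP. intro hno. apply ho. exists N. intros k hk hBk.
      apply hno, hshift; eauto. }
    assert (Pr (fun o => exists j, B (N + j)%nat o) <= Pr (fun o => ~ E o) / 2).
    { apply Pr_union_le; auto. }
    lra. }
  rewrite Pr_compl in hnotE by auto.
  pose proof (Pr_le_1 E hE). lra.
Qed.

End Probability.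

Section Independence.
Variables (d : nat) (P : prob_space) (W : pt -> nat -> Omega P -> R) (F : R -> R).
Hypothesis HW : iid_conductances d P W F.

Definition all_below (t : R) (G : list (pt * nat)) (o : Omega P) : Prop :=
  Forall (fun e => W (fst e) (snd e) o <= t) G.

Lemma event_all_below t G : Forall (is_edge d) G -> event P (all_below t G).
Proof.
  intro hG. apply event_Forall. intros [x i] he.
  apply (proj1 (proj2 HW)), (proj1 (Forall_forall _ _) hG _ he).
Qed.

Lemma Pr_all_below t (l : list (pt * nat)) :
  NoDup l -> Forall (is_edge d) l -> Pr P (all_below t l) = F t ^ length l.
Proof.
  intros hnd hl. unfold all_below. rewrite (proj2 (proj2 HW) l (fun _ => t) hnd hl).
  clear. induction l; simpl; auto. rewrite IHl; ring.
Qed.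

(* Induction on L: conditioning on the first group G either way, the event
   "l below and G below" is "l ++ G below". *)
Lemma Pr_below_and_no_group_below t ell (l : list (pt * nat)) (L : list (list (pt * nat))) :
  NoDup (l ++ concat L) -> Forall (is_edge d) (l ++ concat L) ->
  Forall (fun G => length G = ell) L ->
  Pr P (fun o => all_below t l o /\ Forall (fun G => ~ all_below t G o) L)
  = F t ^ length l * (1 - F t ^ ell) ^ length L.
Proof.
  revert l. induction L as [|G L IH]; intros l hnd hed hlen.
  - rewrite app_nil_r in *. rewrite <- Pr_all_below by auto. simpl. rewrite Rmult_1_r.
    apply Pr_ext. intro o; split; [tauto | split; auto].
  - simpl in hnd, hed. inversion hlen as [|? ? hG hlen']; subst ell.
    assert (hev : event P (fun o => all_below t l o /\ Forall (fun G => ~ all_below t G o) L)).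
    { rewrite !Forall_app, Forall_concat in hed. destruct hed as [hl [_ hL]].
      apply event_and; [apply event_all_below, hl |].
      apply event_Forall. intros G' hG'. apply event_compl, event_all_below.
      exact (proj1 (Forall_forall _ _) hL G' hG'). }
    assert (hevG : event P (all_below t G)).
    { apply event_all_below. rewrite !Forall_app in hed. tauto. }
    assert (hsplit := Pr_split P _ _ hev hevG).
    rewrite IH in hsplit.
    2:{ apply (NoDup_app_remove_l G).
        exact (Permutation_NoDup (Permutation_app_swap_app l G _) hnd). }
    2:{ rewrite !Forall_app in *. tauto. }
    2:{ exact hlen'. }
    rewrite (Pr_ext P (fun o => _ /\ all_below t G o)
               (fun o => all_below t (l ++ G) o /\ Forall (fun G => ~ all_below t G o) L)) in hsplit.
    2:{ intro o. unfold all_below. rewrite Forall_app. tauto. }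
    rewrite IH, length_app, pow_add in hsplit by (rewrite <- ?app_assoc; auto).
    rewrite (Pr_ext P _ (fun o => (all_below t l o /\ Forall (fun G => ~ all_below t G o) L)
                                  /\ ~ all_below t G o)).
    2:{ intro o. split; [intros [? h]; inversion h; tauto | intros [[] ?]; auto]. }
    simpl length. simpl pow. lra.
Qed.

Lemma Pr_no_group_below t ell (L : list (list (pt * nat))) :
  NoDup (concat L) -> Forall (is_edge d) (concat L) -> Forall (fun G => length G = ell) L ->
  Pr P (fun o => Forall (fun G => ~ all_below t G o) L) = (1 - F t ^ ell) ^ length L.
Proof.
  intros hnd hed hlen.
  assert (h := Pr_below_and_no_group_below t ell [] L hnd hed hlen).
  simpl in h. rewrite Rmult_1_l in h. rewrite <- h.
  apply Pr_ext. intro o; split; [split; [constructor | auto] | tauto].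
Qed.

Lemma cdf_Pr x i u : is_edge d (x, i) -> F u = Pr P (fun o => W x i o <= u).
Proof.
  intro he.
  assert (hprod := proj2 (proj2 HW) [(x, i)] (fun _ => u)).
  simpl in hprod. rewrite Rmult_1_r in hprod.
  rewrite <- hprod; [| constructor; [intros [] | constructor] | constructor; [exact he | constructor]].
  apply Pr_ext. intro o; split; [intro h; inversion h; auto | intro h; constructor; auto].
Qed.

Lemma cdf_bounds (hd : (0 < d)%nat) u : 0 <= F u <= 1.
Proof.
  assert (he : is_edge d (repeat 0%Z d, 0%nat)) by (split; [apply repeat_length | exact hd]).
  rewrite (cdf_Pr _ _ u he).
  split; [apply Pr_nonneg | apply Pr_le_1]; apply (proj1 (proj2 HW)), he.
Qed.

Lemma cdf_mono (hd : (0 < d)%nat) u v : u <= v -> F u <= F v.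
Proof.
  intro huv.
  assert (he : is_edge d (repeat 0%Z d, 0%nat)) by (split; [apply repeat_length | exact hd]).
  rewrite !(cdf_Pr _ _ _ he).
  apply Pr_le; try apply (proj1 (proj2 HW)), he. intros o ho; lra.
Qed.

End Independence.

Lemma in_zrange_aux a m k : In k (zrange_aux a m) <-> (a <= k < a + Z.of_nat m)%Z.
Proof. revert a; induction m as [|m IH]; intro a; simpl; [| rewrite IH]; lia. Qed.

Lemma NoDup_zrange_aux a m : NoDup (zrange_aux a m).
Proof.
  revert a; induction m as [|m IH]; intro a; simpl; constructor; auto.
  rewrite in_zrange_aux; lia.
Qed.

Lemma length_zrange_aux a m : length (zrange_aux a m) = m.
Proof. revert a; induction m; intro a; simpl; auto. Qed.

Lemma in_zrange n k : In k (zrange n) <-> (- Z.of_nat n <= k <= Z.of_nat n)%Z.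
Proof. unfold zrange. rewrite in_zrange_aux. lia. Qed.

Lemma NoDup_flat_map_disjoint {A B} (f : A -> list B) (l : list A) :
  NoDup l -> (forall x, In x l -> NoDup (f x)) ->
  (forall x y b, In x l -> In y l -> x <> y -> In b (f x) -> In b (f y) -> False) ->
  NoDup (flat_map f l).
Proof.
  induction l as [|x l IH]; intros hl hf hdisj; simpl; [constructor |].
  inversion hl; subst. apply NoDup_app.
  - apply hf; left; auto.
  - apply IH; auto.
    + intros; apply hf; right; auto.
    + intros y z b hy hz; apply hdisj; right; auto.
  - intros b hx hl'. apply in_flat_map in hl'. destruct hl' as [y [hy hb]].
    apply (hdisj x y b); [left | right | intros <- |..]; auto.
Qed.

Lemma in_box_iff d n x : In x (box d n) <-> in_box d n x.
Proof.
  unfold in_box. revert x; induction d as [|d IH]; intro x; simpl.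
  - split; [intros [<- | []]; auto | intros [h _]; destruct x; simpl in h; [auto | lia]].
  - rewrite in_flat_map. split.
    + intros [k [hk hx]]. apply in_map_iff in hx. destruct hx as [y [<- hy]].
      apply IH in hy. destruct hy as [h1 h2]. simpl; split; auto.
      constructor; auto. apply in_zrange; auto.
    + intros [h1 h2]. destruct x as [|k y]; simpl in h1; [lia |]. inversion h2; subst.
      exists k; split; [apply in_zrange; auto | apply in_map, IH; split; auto].
Qed.

Lemma NoDup_box d n : NoDup (box d n).
Proof.
  induction d as [|d IH]; simpl; [repeat constructor; auto |].
  apply NoDup_flat_map_disjoint; [apply NoDup_zrange_aux | |].
  - intros k _. apply FinFun.Injective_map_NoDup; auto. intros a b h; inversion h; auto.
  - intros k k' a _ _ hk h1 h2. apply in_map_iff in h1, h2.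
    destruct h1 as [y [<- _]], h2 as [y' [h _]]. inversion h; auto.
Qed.

Lemma length_box d n : length (box d n) = Nat.pow (2 * n + 1) d.
Proof.
  induction d as [|d IH]; [reflexivity |]. simpl box.
  rewrite (flat_map_constant_length (c := Nat.pow (2 * n + 1) d)).
  - unfold zrange. rewrite length_zrange_aux, Nat.pow_succ_r'. lia.
  - intros; rewrite length_map; auto.
Qed.

Lemma box_mono d m n x : (m <= n)%nat -> In x (box d m) -> In x (box d n).
Proof.
  rewrite !in_box_iff. intros h [h1 h2]. split; auto.
  eapply Forall_impl; [| apply h2]. simpl. intros a ha. lia.
Qed.

Fixpoint decr (x : pt) (i : nat) : pt :=
  match x, i with
  | [], _ => []
  | k :: x', O => (k - 1)%Z :: x'
  | k :: x', S i' => k :: decr x' i'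
  end.

Lemma incr_decr x i : incr (decr x i) i = x.
Proof. revert i; induction x; intros [|i]; simpl; auto; try rewrite IHx; f_equal; lia. Qed.

Lemma decr_incr x i : decr (incr x i) i = x.
Proof. revert i; induction x; intros [|i]; simpl; auto; try rewrite IHx; f_equal; lia. Qed.

Lemma incr_eq_iff y x i : incr y i = x <-> y = decr x i.
Proof. split; [intros <-; rewrite decr_incr | intros ->; rewrite incr_decr]; auto. Qed.

Lemma decr_inj x y i : decr x i = decr y i -> x = y.
Proof. intro h. rewrite <- (incr_decr x i), <- (incr_decr y i), h; auto. Qed.

Lemma length_decr x i : length (decr x i) = length x.
Proof. revert i; induction x; intros [|i]; simpl; auto. Qed.

Definition zsum (x : pt) : Z := fold_right Z.add 0%Z x.

Lemma zsum_decr x i : (i < length x)%nat -> zsum (decr x i) = (zsum x - 1)%Z.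
Proof. revert i; induction x; intros [|i] h; simpl in *; try lia. rewrite IHx; lia. Qed.

Definition star (d : nat) (x : pt) : list (pt * nat) :=
  flat_map (fun i => [(x, i); (decr x i, i)]) (seq 0 d).

Lemma length_star d x : length (star d x) = (2 * d)%nat.
Proof.
  unfold star. rewrite (flat_map_constant_length (c := 2%nat)), length_seq; auto. lia.
Qed.

Lemma in_star d x e :
  In e (star d x) <-> exists i, (i < d)%nat /\ (e = (x, i) \/ e = (decr x i, i)).
Proof.
  unfold star. rewrite in_flat_map. split.
  - intros [i [hi he]]. apply in_seq in hi. exists i; split; [lia |]. simpl in he; intuition.
  - intros [i [hi he]]. exists i; split; [apply in_seq; lia | simpl; intuition].
Qed.

Lemma star_edges d x : length x = d -> Forall (is_edge d) (star d x).
Proof.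
  intro hx. apply Forall_forall. intros e he. apply in_star in he.
  destruct he as [i [hi [-> | ->]]]; split; simpl; auto. rewrite length_decr; auto.
Qed.

Definition even_site (d : nat) (x : pt) : Prop := length x = d /\ Z.even (zsum x) = true.

Lemma even_sites_not_adjacent x y i :
  Z.even (zsum x) = true -> Z.even (zsum y) = true -> (i < length y)%nat -> x <> decr y i.
Proof.
  intros hx hy hi ->. rewrite zsum_decr in hx by auto.
  replace (zsum y - 1)%Z with (Z.pred (zsum y)) in hx by lia.
  rewrite Z.even_pred, <- Z.negb_even, hy in hx. discriminate.
Qed.

(* Stars of distinct even sites are edge-disjoint: an edge (z, i) joins z and
   z + e_i, whose coordinate sums have different parities. *)
Lemma NoDup_stars d (S : list pt) :
  NoDup S -> (forall x, In x S -> even_site d x) -> NoDup (flat_map (star d) S).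
Proof.
  intros hS heven. apply NoDup_flat_map_disjoint; auto.
  - intros x hx. destruct (heven x hx) as [hl _]. unfold star.
    apply NoDup_flat_map_disjoint; [apply seq_NoDup | |].
    + intros i hi. apply in_seq in hi. constructor; [| repeat constructor; auto].
      intros [h | []]. apply (f_equal (fun e => zsum (fst e))) in h. simpl in h.
      rewrite zsum_decr in h; lia.
    + intros i j e _ _ hij ha hb. simpl in ha, hb.
      destruct ha as [<- | [<- | []]]; destruct hb as [h | [h | []]]; inversion h; auto.
  - intros x y e hx hy hxy ha hb. apply in_star in ha, hb.
    destruct (heven x hx) as [lx ex], (heven y hy) as [ly ey].
    destruct ha as [i [hi [-> | ->]]], hb as [j [hj [hb | hb]]]; injection hb as e1 e2.
    + auto.
    + apply (even_sites_not_adjacent x y j); auto; lia.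
    + apply (even_sites_not_adjacent y x i); auto; lia.
    + apply hxy. subst j. eapply decr_inj; eauto.
Qed.

Definition even_sites (d' m : nat) : list pt :=
  flat_map (fun y => map (fun z => z :: y) (filter (fun z => Z.even (z + zsum y)) (zrange m)))
           (box d' m).

Lemma in_even_sites d' m x :
  In x (even_sites d' m) -> In x (box (S d') m) /\ even_site (S d') x.
Proof.
  unfold even_sites. rewrite in_flat_map. intros [y [hy hx]]. apply in_map_iff in hx.
  destruct hx as [z [<- hz]]. apply filter_In in hz. destruct hz as [hz1 hz2].
  apply in_box_iff in hy. destruct hy as [hy1 hy2]. split.
  - apply in_box_iff. split; simpl; auto. constructor; auto. apply in_zrange; auto.
  - split; simpl; auto.
Qed.

Lemma NoDup_even_sites d' m : NoDup (even_sites d' m).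
Proof.
  unfold even_sites. apply NoDup_flat_map_disjoint; [apply NoDup_box | |].
  - intros y _. apply FinFun.Injective_map_NoDup; [intros a b h; inversion h; auto |].
    apply NoDup_filter, NoDup_zrange_aux.
  - intros y y' x _ _ hyy h1 h2. apply in_map_iff in h1, h2.
    destruct h1 as [z [<- _]], h2 as [z' [h _]]. inversion h; auto.
Qed.

Lemma length_filter_parity a k r :
  (k <= length (filter (fun z => Z.even (z + r)) (zrange_aux a (2 * k))))%nat.
Proof.
  revert a; induction k as [|k IH]; intro a; [simpl; lia |].
  replace (2 * S k)%nat with (S (S (2 * k))) by lia. simpl.
  specialize (IH (a + 1 + 1)%Z).
  replace (a + 1 + r)%Z with (Z.succ (a + r)) by lia.
  rewrite Z.even_succ, <- Z.negb_even.
  destruct (Z.even (a + r)); simpl; replace (k + (k + 0))%nat with (2 * k)%nat by lia; lia.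
Qed.

Lemma length_even_sites d' m : (Nat.pow (2 * m + 1) d' * m <= length (even_sites d' m))%nat.
Proof.
  unfold even_sites. rewrite <- length_box. generalize (box d' m). intro l.
  induction l as [|y l IH]; simpl; [lia |]. rewrite length_app, length_map.
  apply Nat.add_le_mono; auto.
  unfold zrange. replace (2 * m + 1)%nat with (S (2 * m)) by lia. simpl.
  pose proof (length_filter_parity (- Z.of_nat m + 1) m (zsum y)) as hpar.
  replace (2 * m)%nat with (m + (m + 0))%nat in hpar by lia.
  destruct (Z.even (- Z.of_nat m + zsum y)); simpl; lia.
Qed.

Lemma sumR_le {A} (g h : A -> R) l : (forall a, In a l -> g a <= h a) -> sumR g l <= sumR h l.
Proof.
  induction l as [|a l IH]; intro hgh; unfold sumR in *; simpl; [lra |].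
  pose proof (hgh a (or_introl eq_refl)).
  assert (fold_right Rplus 0 (map g l) <= fold_right Rplus 0 (map h l)).
  { apply IH; intros; apply hgh; right; auto. }
  lra.
Qed.

Lemma sumR_ext {A} (g h : A -> R) l : (forall a, In a l -> g a = h a) -> sumR g l = sumR h l.
Proof. intro hgh. apply Rle_antisym; apply sumR_le; intros a ha; rewrite hgh; auto; lra. Qed.

Lemma sumR_plus {A} (g h : A -> R) l : sumR (fun a => g a + h a) l = sumR g l + sumR h l.
Proof. induction l as [|a l IH]; unfold sumR in *; simpl; [ring | rewrite IH; ring]. Qed.

Lemma sumR_zero {A} (l : list A) : sumR (fun _ => 0) l = 0.
Proof. induction l as [|a l IH]; unfold sumR in *; simpl; [| rewrite IH]; ring. Qed.

Lemma sumR_swap {A B} (g : A -> B -> R) l1 l2 :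
  sumR (fun a => sumR (g a) l2) l1 = sumR (fun b => sumR (fun a => g a b) l1) l2.
Proof.
  induction l1 as [|a l1 IH]; [symmetry; apply sumR_zero |].
  unfold sumR at 1; simpl. fold (sumR (fun a => sumR (g a) l2) l1).
  rewrite IH, <- sumR_plus. reflexivity.
Qed.

Lemma sumR_const {A} (l : list A) c : sumR (fun _ => c) l = INR (length l) * c.
Proof.
  induction l as [|a l IH]; [unfold sumR; simpl; ring |].
  change (length (a :: l)) with (S (length l)). rewrite S_INR, Rmult_plus_distr_r, <- IH.
  unfold sumR; simpl; ring.
Qed.

Lemma sumR_seq_le (g : nat -> R) d t :
  (forall i, (i < d)%nat -> g i <= t) -> sumR g (seq 0 d) <= INR d * t.
Proof.
  intro hg. replace (INR d * t) with (sumR (fun _ => t) (seq 0 d))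
    by (rewrite sumR_const, length_seq; reflexivity).
  apply sumR_le. intros i hi. apply in_seq in hi. apply hg; lia.
Qed.

Definition pt_eq_dec := list_eq_dec Z.eq_dec.

Lemma sumR_point (l : list pt) x (g : pt -> R) : NoDup l ->
  sumR (fun y => if pt_eq_dec y x then g y else 0) l = if in_dec pt_eq_dec x l then g x else 0.
Proof.
  induction l as [|a l IH]; intro hl; [reflexivity |].
  unfold sumR in *; simpl. inversion hl as [|? ? hal hl']; subst. rewrite IH by auto.
  destruct (pt_eq_dec a x) as [-> | hax].
  - destruct (in_dec pt_eq_dec x l); [contradiction |].
    destruct (in_dec pt_eq_dec x (x :: l)) as [_ | h]; [ring | destruct h; left; auto].
  - destruct (in_dec pt_eq_dec x (a :: l)) as [[h | h] | h], (in_dec pt_eq_dec x l) as [h' | h'];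
      try congruence; try contradiction; try ring.
Qed.

Lemma sumR_point_le (l : list pt) x (g : pt -> R) : NoDup l -> 0 <= g x ->
  sumR (fun y => if pt_eq_dec y x then g y else 0) l <= g x.
Proof. intros hl hgx. rewrite sumR_point by auto. destruct in_dec; lra. Qed.

Definition indicator (x : pt) (y : pt) : R := if pt_eq_dec y x then 1 else 0.

Lemma energy_indicator_le d n (w : pt -> nat -> R) x :
  (forall y i, length y = d -> (i < d)%nat -> 0 <= w y i) -> length x = d ->
  energy d n w (indicator x)
  <= sumR (fun i => w x i) (seq 0 d) + sumR (fun i => w (decr x i) i) (seq 0 d).
Proof.
  intros hw hx. unfold energy.
  eapply Rle_trans.
  { apply (sumR_le _ (fun y => sumR (fun i => if pt_eq_dec y x then w y i else 0) (seq 0 d)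
                     + sumR (fun i => if pt_eq_dec y (decr x i) then w y i else 0) (seq 0 d))).
    intros y hy. apply in_box_iff in hy. rewrite <- sumR_plus. apply sumR_le.
    intros i hi. apply in_seq in hi. assert (0 <= w y i) by (apply hw; [apply hy | lia]).
    unfold indicator.
    destruct (pt_eq_dec (incr y i) x) as [e1 | e1], (pt_eq_dec y (decr x i)) as [e2 | e2];
      try (apply incr_eq_iff in e1; contradiction);
      try (apply incr_eq_iff in e2; contradiction);
      destruct (pt_eq_dec y x); nra. }
  rewrite sumR_plus. apply Rplus_le_compat.
  - rewrite (sumR_ext _ (fun y => if pt_eq_dec y x then sumR (fun i => w y i) (seq 0 d) else 0)).
    + apply sumR_point_le; [apply NoDup_box |].
      rewrite <- (sumR_zero (seq 0 d)). apply sumR_le.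
      intros i hi. apply in_seq in hi. apply hw; [auto | lia].
    + intros y _. destruct pt_eq_dec; [reflexivity | apply sumR_zero].
  - rewrite sumR_swap. apply sumR_le. intros i hi. apply in_seq in hi.
    apply (sumR_point_le _ (decr x i) (fun y => w y i)); [apply NoDup_box |].
    apply hw; [rewrite length_decr | lia]; auto.
Qed.

(* Test function: the indicator of x, whose energy only sees the star of x. *)
Lemma lambda1_le_star d n (w : pt -> nat -> R) x t :
  (forall y i, length y = d -> (i < d)%nat -> 0 <= w y i) ->
  In x (box d n) ->
  Forall (fun e => w (fst e) (snd e) <= t) (star d x) ->
  lambda1_le d n w (2 * INR d * t).
Proof.
  intros hw hx hstar l [hl _].
  assert (hxl : length x = d) by (apply in_box_iff in hx; apply hx).
  rewrite Forall_forall in hstar.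
  assert (hbound : forall i, (i < d)%nat -> w x i <= t /\ w (decr x i) i <= t).
  { intros i hi. split; [apply (hstar (x, i)) | apply (hstar (decr x i, i))];
      apply in_star; eauto. }
  eapply Rle_trans; [apply hl |].
  - exists (indicator x). repeat split.
    + intros y hy. unfold indicator. destruct pt_eq_dec; [subst; contradict hy; apply in_box_iff |]; auto.
    + rewrite (sumR_ext _ (fun y => if pt_eq_dec y x then 1 else 0)).
      2:{ intros y _; unfold indicator; destruct pt_eq_dec; ring. }
      rewrite (sumR_point _ x (fun _ => 1)) by apply NoDup_box.
      destruct in_dec; tauto.
  - eapply Rle_trans; [apply energy_indicator_le; auto |].
    assert (sumR (fun i => w x i) (seq 0 d) <= INR d * t) by (apply sumR_seq_le; apply hbound).
    assert (sumR (fun i => w (decr x i) i) (seq 0 d) <= INR d * t) by (apply sumR_seq_le; apply hbound).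
    lra.
Qed.

Lemma exp_le x y : x <= y -> exp x <= exp y.
Proof. intros [h | ->]; [left; apply exp_increasing |]; lra. Qed.

Lemma ln_le_mono x y : 0 < x -> x <= y -> ln x <= ln y.
Proof. intros hx [h | ->]; [left; apply ln_increasing |]; lra. Qed.

Lemma ln_le_sub1 y : 0 < y -> ln y <= y - 1.
Proof. intro hy. pose proof (exp_ineq1_le (ln y)) as h. rewrite exp_ln in h by auto. lra. Qed.

Lemma exp_ge_quadratic y : 0 <= y -> 1 + y + y * y / 4 <= exp y.
Proof.
  intro hy. replace y with (y / 2 + y / 2) at 4 by field. rewrite exp_plus.
  pose proof (exp_ineq1_le (y / 2)). nra.
Qed.

Lemma exp_pow x n : exp x ^ n = exp (INR n * x).
Proof.
  induction n as [|n IH]; [simpl; rewrite Rmult_0_l, exp_0; auto |].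
  rewrite S_INR. simpl. rewrite IH, <- exp_plus. f_equal; ring.
Qed.

Lemma nat_large (A : R) : exists N, forall n, (N <= n)%nat -> A < INR n.
Proof.
  destruct (INR_archimed 1 A) as [N hN]; [lra |].
  exists N. intros n hn. apply le_INR in hn. lra.
Qed.

Lemma one_minus_pow_le_exp p M : 0 <= p <= 1 -> (1 - p) ^ M <= exp (- (p * INR M)).
Proof.
  intro hp. replace (- (p * INR M)) with (INR M * - p) by ring. rewrite <- exp_pow.
  apply pow_incr. pose proof (exp_ineq1_le (- p)). lra.
Qed.

(* (x+1)^-(r+1) <= (x^-r - (x+1)^-r) / r, from ln(1 + 1/x) >= 1/(x+1) and
   exp u >= 1 + u. *)
Lemma power_telescoping (r x : R) : 0 < r -> 1 <= x ->
  exp (- (r + 1) * ln (x + 1)) <= (exp (- r * ln x) - exp (- r * ln (x + 1))) / r.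
Proof.
  intros hr hx.
  assert (hlog : 1 / (x + 1) <= ln (x + 1) - ln x).
  { pose proof (ln_le_sub1 (x / (x + 1)) ltac:(apply Rdiv_lt_0_compat; lra)) as h.
    unfold Rdiv in h. rewrite ln_mult, ln_Rinv in h by (try apply Rinv_0_lt_compat; lra).
    assert (x * / (x + 1) - 1 = - (1 / (x + 1))) by (field; lra). lra. }
  replace (- r * ln x) with (- r * ln (x + 1) + r * (ln (x + 1) - ln x)) by ring.
  replace (- (r + 1) * ln (x + 1)) with (- r * ln (x + 1) + - ln (x + 1)) by ring.
  rewrite !exp_plus, exp_Ropp, exp_ln by lra.
  pose proof (exp_ineq1_le (r * (ln (x + 1) - ln x))).
  pose proof (exp_pos (- r * ln (x + 1))).
  set (E := exp (- r * ln (x + 1))) in *.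
  apply (Rmult_le_reg_l r); auto.
  replace (r * ((E * exp (r * (ln (x + 1) - ln x)) - E) / r))
    with (E * (exp (r * (ln (x + 1) - ln x)) - 1)) by (field; lra).
  replace (r * (E * / (x + 1))) with (E * (r * (1 / (x + 1)))) by (field; lra).
  apply Rmult_le_compat_l; [lra |]. nra.
Qed.

Lemma power_series_tail_small (r : R) (a : nat -> R) (N0 : nat) : 0 < r ->
  (forall k, (N0 <= k)%nat -> a k <= exp (- (1 + r) * ln (INR k + 1))) ->
  forall eta, 0 < eta -> exists N, forall M, sum_f_R0 (fun j => a (N + j)%nat) M <= eta.
Proof.
  intros hr ha eta heta.
  set (tail := fun N : nat => exp (- r * ln (INR N)) / r).
  assert (htele : forall N M, (N0 <= N)%nat -> (1 <= N)%nat ->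
            sum_f_R0 (fun j => a (N + j)%nat) M <= tail N - tail (N + S M)%nat).
  { intros N M hN0 hN1. unfold tail. rewrite <- Rdiv_minus_distr.
    induction M as [|M IH]; simpl sum_f_R0.
    - rewrite Nat.add_0_r, Nat.add_1_r, S_INR.
      eapply Rle_trans; [apply ha; auto |].
      replace (- (1 + r)) with (- (r + 1)) by ring.
      apply power_telescoping; auto. apply (le_INR 1); auto.
    - replace (N + S (S M))%nat with (S (N + S M)) by lia.
      assert (hk : 1 <= INR (N + S M)) by (apply (le_INR 1); lia).
      pose proof (power_telescoping r _ hr hk) as hstep.
      rewrite <- S_INR in hstep. replace (- (r + 1)) with (- (1 + r)) in hstep by ring.
      pose proof (ha (N + S M)%nat ltac:(lia)) as haM. rewrite <- S_INR in haM.
      unfold Rdiv in *. lra. }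
  destruct (nat_large (exp (- ln (r * eta) / r))) as [N hN].
  set (N1 := Nat.max N (Nat.max N0 1)).
  exists N1. intro M.
  assert (htailpos : 0 <= tail (N1 + S M)%nat) by (apply Rlt_le, Rdiv_lt_0_compat; [apply exp_pos | auto]).
  assert (htailN : tail N1 < eta).
  { specialize (hN N1 ltac:(lia)). unfold tail.
    apply (Rmult_lt_reg_l r); auto.
    replace (r * (exp (- r * ln (INR N1)) / r)) with (exp (- r * ln (INR N1))) by (field; lra).
    rewrite <- (exp_ln (r * eta)) by nra. apply exp_increasing.
    apply ln_increasing in hN; [| apply exp_pos]. rewrite ln_exp in hN.
    apply (Rmult_lt_compat_l r) in hN; auto.
    replace (r * (- ln (r * eta) / r)) with (- ln (r * eta)) in hN by (field; lra). lra. }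
  pose proof (htele N1 M ltac:(lia) ltac:(lia)). lra.
Qed.

Lemma even_stars_edges d' m :
  Forall (is_edge (S d')) (concat (map (star (S d')) (even_sites d' m))).
Proof.
  apply Forall_concat, Forall_map, Forall_forall.
  intros x hx. apply star_edges, (in_even_sites d' m x hx).
Qed.

Section GoodStars.
Variables (d' : nat) (P : prob_space) (W : pt -> nat -> Omega P -> R) (F : R -> R).
Hypothesis HW : iid_conductances (S d') P W F.

Definition no_good_star (m : nat) (t : R) (o : Omega P) : Prop :=
  Forall (fun G => ~ all_below P W t G o) (map (star (S d')) (even_sites d' m)).

Lemma event_no_good_star m t : event P (no_good_star m t).
Proof.
  apply event_Forall. intros G hG. apply event_compl, (event_all_below (S d') P W F HW).
  exact (proj1 (Forall_forall _ _) (proj1 (Forall_concat _ _) (even_stars_edges d' m)) G hG).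
Qed.

Lemma Pr_no_good_star m t :
  Pr P (no_good_star m t) = (1 - F t ^ (2 * S d')) ^ length (even_sites d' m).
Proof.
  unfold no_good_star. rewrite (Pr_no_group_below (S d') P W F HW t (2 * S d')).
  - rewrite length_map; auto.
  - rewrite <- flat_map_concat_map. apply NoDup_stars; [apply NoDup_even_sites |].
    intros x hx; apply in_even_sites in hx; apply hx.
  - apply even_stars_edges.
  - apply Forall_map, Forall_forall. intros x _. apply length_star.
Qed.

Lemma lambda1_le_of_good_star m t n o : (m <= n)%nat -> ~ no_good_star m t o ->
  lambda1_le (S d') n (fun x i => W x i o) (2 * INR (S d') * t).
Proof.
  intros hmn hgood.
  assert (hsome : Exists (fun G => all_below P W t G o) (map (star (S d')) (even_sites d' m))).
  { apply NNPP. intro hnone. apply hgood, Forall_Exists_neg, hnone. }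
  apply Exists_exists in hsome. destruct hsome as [G [hG hbelow]].
  apply in_map_iff in hG. destruct hG as [x [<- hx]].
  apply in_even_sites in hx. destruct hx as [hxbox [hxlen _]].
  apply (lambda1_le_star _ _ _ x).
  - intros y i hy hi. left. apply (proj1 HW). split; auto.
  - eapply box_mono; eauto.
  - exact hbelow.
Qed.

(* Borel-Cantelli: P(no good star in B_(m k)) <= exp (- mean) <= (k + 1)^-(1 + r). *)
Lemma eventually_lambda1_le (t : nat -> R) (m : nat -> nat) (r : R) (N0 : nat) :
  0 < r ->
  (forall k, (N0 <= k)%nat ->
     (1 + r) * ln (INR k + 1) <= F (t k) ^ (2 * S d') * INR (length (even_sites d' (m k)))) ->
  almost_surely P (fun o => exists K, forall k, (K <= k)%nat -> forall n, (m k <= n)%nat ->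
     lambda1_le (S d') n (fun x i => W x i o) (2 * INR (S d') * t k)).
Proof.
  intros hr hmean.
  set (B := fun k => no_good_star (m k) (t k)).
  assert (hsmall : forall k, (N0 <= k)%nat -> Pr P (B k) <= exp (- (1 + r) * ln (INR k + 1))).
  { intros k hk. unfold B. rewrite Pr_no_good_star.
    pose proof (cdf_bounds (S d') P W F HW ltac:(lia) (t k)).
    eapply Rle_trans.
    { apply one_minus_pow_le_exp.
      split; [apply pow_le | rewrite <- (pow1 (2 * S d')); apply pow_incr]; lra. }
    apply exp_le. specialize (hmean k hk). lra. }
  destruct (borel_cantelli P B (fun k => event_no_good_star (m k) (t k))
              (power_series_tail_small r _ N0 hr hsmall)) as [E [hE [hPE hEB]]].
  exists E. split; [exact hE | split; [exact hPE |]].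
  intros o ho. destruct (hEB o ho) as [K hK]. exists K. intros k hk n hn.
  exact (lambda1_le_of_good_star (m k) (t k) n o hn (hK k hk)).
Qed.

End GoodStars.

Lemma INR_le_pow2 n : INR n <= 2 ^ n.
Proof.
  induction n as [|n IH]; [simpl; lra |].
  rewrite S_INR. simpl. pose proof (pow_R1_Rle 2 n ltac:(lra)). lra.
Qed.

Lemma doubling_lower_bound (g : R -> R) (u1 c0 eta : R) :
  0 < u1 -> 0 <= c0 -> 0 <= eta ->
  (forall u, u1 / 2 <= u <= u1 -> c0 <= g u) ->
  (forall u, 0 < u -> 2 * u <= u1 -> exp (- eta * ln 2) * g (2 * u) <= g u) ->
  forall u, 0 < u <= u1 -> c0 * exp (eta * (ln u - ln u1)) <= g u.
Proof.
  intros hu1 hc0 heta hbase hdouble.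
  assert (hbase' : forall u, u1 / 2 <= u <= u1 -> c0 * exp (eta * (ln u - ln u1)) <= g u).
  { intros u hu. specialize (hbase u hu).
    assert (ln u <= ln u1) by (apply ln_le_mono; lra).
    assert (exp (eta * (ln u - ln u1)) <= 1) by (rewrite <- exp_0; apply exp_le; nra).
    nra. }
  assert (hscale : forall k u, u1 / 2 ^ S k <= u <= u1 -> c0 * exp (eta * (ln u - ln u1)) <= g u).
  { induction k as [|k IH]; intros u hu.
    - apply hbase'. simpl in hu. rewrite Rmult_1_r in hu. exact hu.
    - destruct (Rle_lt_dec (u1 / 2) u) as [h | h]; [apply hbase'; lra |].
      assert (hpow : 0 < 2 ^ S k) by (apply pow_lt; lra).
      assert (hu0 : 0 < u).
      { eapply Rlt_le_trans; [| apply hu]. apply Rdiv_lt_0_compat; auto. apply pow_lt; lra. }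
      assert (h2u : u1 / 2 ^ S k <= 2 * u <= u1).
      { split; [| lra]. replace (u1 / 2 ^ S k) with (2 * (u1 / 2 ^ S (S k)))
          by (change (2 ^ S (S k)) with (2 * 2 ^ S k); field; lra).
        lra. }
      eapply Rle_trans; [| apply hdouble; lra].
      eapply Rle_trans; [| apply Rmult_le_compat_l; [apply Rlt_le, exp_pos | apply (IH _ h2u)]].
      rewrite ln_mult by lra.
      replace (eta * (ln 2 + ln u - ln u1)) with (eta * ln 2 + eta * (ln u - ln u1)) by ring.
      rewrite exp_plus. replace (- eta * ln 2) with (- (eta * ln 2)) by ring.
      rewrite exp_Ropp. right. field. apply Rgt_not_eq, exp_pos. }
  intros u hu.
  destruct (nat_large (u1 / u)) as [k hk]. specialize (hk k (le_n k)).
  apply (hscale k). split; [| apply hu].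
  pose proof (INR_le_pow2 k). assert (hpow : 0 < 2 ^ S k) by (apply pow_lt; lra).
  apply (Rmult_le_reg_r (2 ^ S k)); auto.
  unfold Rdiv. rewrite Rmult_assoc, Rinv_l, Rmult_1_r by lra.
  apply (Rmult_lt_compat_r u) in hk; [| lra].
  unfold Rdiv in hk. rewrite Rmult_assoc, Rinv_l in hk by lra.
  simpl. nra.
Qed.

(* The ratio bound |L(v/2)/L(v) - 1| < 1 - q forces L v <> 0, since Rocq's x / 0
   is 0; nonnegativity of F then makes L positive. *)
Lemma slowly_varying_halving (F L : R -> R) (gamma q : R) : 0 < q < 1 ->
  (forall u, 0 <= F u) -> (forall u, 0 < u -> F u = Rpower u gamma * L u) ->
  (forall C, 0 < C -> forall eps, 0 < eps -> exists dl, 0 < dl /\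
     forall u, 0 < u < dl -> Rabs (L (C * u) / L u - 1) < eps) ->
  exists u1, 0 < u1 /\ forall v, 0 < v <= u1 -> 0 < L v /\ q * L v <= L (/ 2 * v).
Proof.
  intros hq hF0 hFL hslow.
  destruct (hslow (/ 2) ltac:(lra) (1 - q) ltac:(lra)) as [dl [hdl hratio]].
  exists (dl / 2). split; [lra |]. intros v hv.
  specialize (hratio v ltac:(lra)).
  apply Rabs_def2 in hratio. destruct hratio as [_ hratio].
  assert (hLv : 0 <= L v).
  { pose proof (hF0 v). rewrite hFL in H by lra. pose proof (exp_pos (gamma * ln v)).
    unfold Rpower in H. nra. }
  destruct hLv as [hLv | hLv].
  - split; auto. assert (hq' : q < L (/ 2 * v) / L v) by lra.
    apply (Rmult_lt_compat_r (L v)) in hq'; auto.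
    unfold Rdiv in hq'. rewrite Rmult_assoc, Rinv_l, Rmult_1_r in hq' by lra. lra.
  - rewrite <- hLv in hratio. unfold Rdiv in hratio. rewrite Rinv_0, Rmult_0_r in hratio. lra.
Qed.

Lemma regularly_varying_lower_bound F gamma eta : 0 <= gamma -> 0 < eta ->
  (forall u, 0 <= F u) -> (forall u v, u <= v -> F u <= F v) ->
  regularly_varying_at_0 F gamma ->
  exists c u0, 0 < c /\ 0 < u0 /\
    forall u, 0 < u <= u0 -> c * exp ((gamma + eta) * ln u) <= F u.
Proof.
  intros hg heta hF0 hFmono [L [hFL hslow]].
  set (q := exp (- eta * ln 2)).
  assert (hq : 0 < q < 1).
  { split; [apply exp_pos |]. unfold q. rewrite <- exp_0. apply exp_increasing.
    pose proof ln_lt_2. nra. }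
  destruct (slowly_varying_halving F L gamma q hq hF0 hFL hslow) as [u1 [hu1 hhalf]].
  assert (hL : forall u, 0 < u -> F u = exp (gamma * ln u) * L u) by (intros; apply hFL; auto).
  set (c0 := F (u1 / 2) / exp (gamma * ln u1)).
  assert (hc0 : 0 < c0).
  { unfold c0. apply Rdiv_lt_0_compat; [| apply exp_pos]. rewrite hL by lra.
    apply Rmult_lt_0_compat; [apply exp_pos | apply hhalf; lra]. }
  assert (hbase : forall u, u1 / 2 <= u <= u1 -> c0 <= L u).
  { intros u hu. unfold c0.
    assert (F (u1 / 2) <= F u) by (apply hFmono; lra).
    assert (exp (gamma * ln u) <= exp (gamma * ln u1)).
    { apply exp_le, Rmult_le_compat_l; [lra | apply ln_le_mono; lra]. }
    pose proof (exp_pos (gamma * ln u)). pose proof (exp_pos (gamma * ln u1)).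
    assert (0 < L u) by (apply hhalf; lra).
    rewrite (hL u) in * by lra.
    apply (Rmult_le_reg_r (exp (gamma * ln u1))); auto.
    unfold Rdiv. rewrite Rmult_assoc, Rinv_l, Rmult_1_r by lra. nra. }
  assert (hdouble : forall u, 0 < u -> 2 * u <= u1 -> q * L (2 * u) <= L u).
  { intros u hu h2u. replace u with (/ 2 * (2 * u)) at 2 by field. apply hhalf; lra. }
  assert (hpotter := doubling_lower_bound L u1 c0 eta hu1 ltac:(lra) ltac:(lra) hbase hdouble).
  exists (c0 * exp (- eta * ln u1)), u1.
  split; [apply Rmult_lt_0_compat; [auto | apply exp_pos] |]. split; auto.
  intros u hu. rewrite hL by lra.
  replace (c0 * exp (- eta * ln u1) * exp ((gamma + eta) * ln u))
    with (exp (gamma * ln u) * (c0 * exp (eta * (ln u - ln u1)))).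
  - apply Rmult_le_compat_l; [apply Rlt_le, exp_pos | apply hpotter; auto].
  - rewrite Rmult_assoc, Rmult_comm, Rmult_assoc, <- !exp_plus. do 2 f_equal. ring.
Qed.

Lemma length_even_sites_ge d' m :
  2 ^ d' * INR m ^ S d' <= INR (length (even_sites d' m)).
Proof.
  eapply Rle_trans; [| apply le_INR, length_even_sites].
  rewrite mult_INR, pow_INR, plus_INR, mult_INR. simpl pow. simpl (INR 1). simpl (INR 2).
  rewrite (Rmult_comm (INR m)), <- Rmult_assoc, <- Rpow_mult_distr.
  apply Rmult_le_compat_r; [apply pos_INR |].
  apply pow_incr. pose proof (pos_INR m). lra.
Qed.

Lemma mean_good_stars_ge d' (F : R -> R) (c kappa t : R) (m : nat) :
  0 < c -> 0 < t -> (1 <= m)%nat -> c * exp (kappa * ln t) <= F t ->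
  exp (2 * INR (S d') * (ln c + kappa * ln t) + (INR d' * ln 2 + INR (S d') * ln (INR m)))
  <= F t ^ (2 * S d') * INR (length (even_sites d' m)).
Proof.
  intros hc ht hm hF.
  assert (hm0 : 0 < INR m) by (apply lt_0_INR; lia).
  rewrite exp_plus. apply Rmult_le_compat; try apply Rlt_le, exp_pos.
  - replace (2 * INR (S d')) with (INR (2 * S d')) by (rewrite mult_INR; reflexivity).
    rewrite <- exp_pow, exp_plus, exp_ln by auto. apply pow_incr.
    split; [apply Rlt_le, Rmult_lt_0_compat; [auto | apply exp_pos] | exact hF].
  - eapply Rle_trans; [| apply length_even_sites_ge].
    rewrite exp_plus, <- !Rpower_pow by lra. right; reflexivity.
Qed.

Lemma polynomial_beats_log (A e c : R) : 0 < e ->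
  exists N, forall k, (N <= k)%nat -> c * ln (INR k + 1) <= exp (A + e * ln (INR k)).
Proof.
  intro he.
  pose proof (Rmax_l 1 (8 * Rabs c / (e * e * exp A))) as hLb1.
  pose proof (Rmax_r 1 (8 * Rabs c / (e * e * exp A))) as hLb2.
  set (Lb := Rmax 1 (8 * Rabs c / (e * e * exp A))) in *.
  destruct (nat_large (exp Lb)) as [N hN]. exists N. intros k hk.
  specialize (hN k hk).
  assert (hk0 : 0 < INR k) by (pose proof (exp_pos Lb); lra).
  set (L := ln (INR k)).
  assert (hL : Lb < L) by (unfold L; rewrite <- (ln_exp Lb); apply ln_increasing; auto; apply exp_pos).
  assert (hL1 : 1 <= L) by lra.
  assert (hLc : 8 * Rabs c <= L * (e * e * exp A)).
  { pose proof (exp_pos A). assert (hX : 0 < e * e * exp A) by (apply Rmult_lt_0_compat; nra).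
    assert (h : 8 * Rabs c / (e * e * exp A) < L) by lra.
    apply (Rmult_lt_compat_r _ _ _ hX) in h. unfold Rdiv in h.
    rewrite Rmult_assoc, Rinv_l, Rmult_1_r in h by lra. lra. }
  assert (hlog : ln (INR k + 1) <= 2 * L).
  { assert (h2k : 2 <= INR k).
    { pose proof (exp_ineq1_le 1). pose proof (exp_le 1 L hL1).
      unfold L in *. rewrite exp_ln in * by lra. lra. }
    replace (2 * L) with (ln (INR k * INR k)) by (unfold L; rewrite ln_mult by lra; ring).
    apply ln_le_mono; nra. }
  pose proof (exp_ge_quadratic (e * L) ltac:(nra)).
  pose proof (exp_pos A).
  rewrite exp_plus. fold L.
  assert (hlog0 : 0 <= ln (INR k + 1)).
  { rewrite <- ln_1. apply ln_le_mono; lra. }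
  assert (c * ln (INR k + 1) <= Rabs c * (2 * L)).
  { eapply Rle_trans; [apply Rmult_le_compat_r; [exact hlog0 | apply Rle_abs] |].
    apply Rmult_le_compat_l; [apply Rabs_pos | exact hlog]. }
  assert (Rabs c * (2 * L) <= exp A * (e * L * (e * L) / 4)).
  { apply (Rmult_le_compat_r L) in hLc; lra. }
  assert (exp A * (e * L * (e * L) / 4) <= exp A * exp (e * L)) by (apply Rmult_le_compat_l; nra).
  lra.
Qed.

Lemma lambda1_le_mono d n w b b' : lambda1_le d n w b -> b <= b' -> lambda1_le d n w b'.
Proof. intros h hb l hl. specialize (h l hl). lra. Qed.

(* For t_k = k^a / (2d), the bound F u >= c u^(gamma + eta) gives
   F(t_k)^(2d) #(even sites of B_k) >= const * k^(d + 2 d (gamma + eta) a). *)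
Lemma power_threshold_mean d' F gamma eta c u0 a :
  0 < c -> 0 < u0 -> a < 0 -> 0 < 2 * INR (S d') * (gamma + eta) * a + INR (S d') ->
  (forall u, 0 < u <= u0 -> c * exp ((gamma + eta) * ln u) <= F u) ->
  exists N0, forall k, (N0 <= k)%nat ->
    (1 + 1) * ln (INR k + 1)
    <= F (Rpower (INR k) a / (2 * INR (S d'))) ^ (2 * S d') * INR (length (even_sites d' k)).
Proof.
  intros hc hu0 ha he hpotter.
  set (d := INR (S d')) in *.
  assert (hd : 1 <= d) by (apply (le_INR 1); lia).
  set (e := 2 * d * (gamma + eta) * a + d) in *.
  destruct (polynomial_beats_log (2 * d * ln c - 2 * d * (gamma + eta) * ln (2 * d)) e 2 he)
    as [N1 hN1].
  destruct (nat_large (exp (ln u0 / a))) as [N2 hN2].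
  exists (Nat.max 1 (Nat.max N1 N2)). intros k hk.
  set (t := Rpower (INR k) a / (2 * d)).
  assert (hk0 : 0 < INR k) by (apply lt_0_INR; lia).
  assert (hlnt : ln t = a * ln (INR k) - ln (2 * d)).
  { unfold t, Rdiv. rewrite ln_mult, ln_Rinv, ln_Rpower; try apply Rinv_0_lt_compat;
      try apply exp_pos; lra. }
  assert (ht : 0 < t) by (apply Rdiv_lt_0_compat; [apply exp_pos | lra]).
  assert (htu0 : t <= u0).
  { rewrite <- (exp_ln t), <- (exp_ln u0) by auto. apply exp_le. rewrite hlnt.
    specialize (hN2 k ltac:(lia)). apply ln_increasing in hN2; [| apply exp_pos].
    rewrite ln_exp in hN2. apply (Rmult_lt_compat_l (- a)) in hN2; [| lra].
    replace (- a * (ln u0 / a)) with (- ln u0) in hN2 by (field; lra).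
    assert (0 <= ln (2 * d)) by (rewrite <- ln_1; apply ln_le_mono; lra). lra. }
  eapply Rle_trans; [| apply (mean_good_stars_ge d' F c (gamma + eta) t k); auto; lia].
  eapply Rle_trans; [apply (hN1 k); lia |]. apply exp_le. rewrite hlnt.
  assert (0 <= INR d' * ln 2).
  { apply Rmult_le_pos; [apply pos_INR | rewrite <- ln_1; apply ln_le_mono; lra]. }
  fold d. unfold e. lra.
Qed.

Lemma lambda1_le_regularly_varying d' P W F gamma delta :
  iid_conductances (S d') P W F -> 0 < gamma -> regularly_varying_at_0 F gamma -> 0 < delta ->
  almost_surely P (fun o => exists N : nat, forall n : nat, (N <= n)%nat ->
    lambda1_le (S d') n (fun x i => W x i o) (Rpower (INR n) (- (1 / (2 * gamma)) + delta))).
Proof.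
  intros HW hg hreg hdelta.
  set (d := INR (S d')).
  assert (hd : 1 <= d) by (apply (le_INR 1); lia).
  set (d0 := Rmin delta (1 / (4 * gamma))).
  assert (hd0 : 0 < d0) by (apply Rmin_case; auto; apply Rdiv_lt_0_compat; lra).
  assert (hd0a : d0 <= 1 / (4 * gamma)) by apply Rmin_r.
  assert (hd0b : d0 <= delta) by apply Rmin_l.
  set (a := - (1 / (2 * gamma)) + d0).
  assert (ha : a < 0).
  { assert (1 / (4 * gamma) < 1 / (2 * gamma)).
    { apply Rmult_lt_compat_l; [lra |]. apply Rinv_lt_contravar; nra. }
    unfold a; lra. }
  set (eta := d0 * gamma * gamma).
  assert (heta : 0 < eta) by (unfold eta; repeat apply Rmult_lt_0_compat; auto).
  assert (he : 0 < 2 * d * (gamma + eta) * a + d).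
  { replace (2 * d * (gamma + eta) * a + d) with (d * d0 * gamma + 2 * d * eta * d0)
      by (unfold a, eta; field; lra).
    pose proof (Rmult_lt_0_compat _ _ (Rmult_lt_0_compat d d0 ltac:(lra) hd0) hg).
    assert (0 <= 2 * d * eta * d0) by (repeat apply Rmult_le_pos; lra). lra. }
  destruct (regularly_varying_lower_bound F gamma eta ltac:(lra) heta
              (fun u => proj1 (cdf_bounds _ _ _ _ HW ltac:(lia) u))
              (cdf_mono _ _ _ _ HW ltac:(lia)) hreg)
    as [c [u0 [hc [hu0 hpotter]]]].
  destruct (power_threshold_mean d' F gamma eta c u0 a hc hu0 ha he hpotter) as [N0 hmean].
  destruct (eventually_lambda1_le d' P W F HW _ (fun k => k) 1 N0 ltac:(lra) hmean)
    as [E [hE [hPE hEK]]].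
  exists E. split; [exact hE | split; [exact hPE |]].
  intros o ho. destruct (hEK o ho) as [K hK]. exists (Nat.max K 1). intros n hn.
  eapply lambda1_le_mono; [apply (hK n ltac:(lia) n (le_n n)) |]. fold d.
  replace (2 * d * (Rpower (INR n) a / (2 * d))) with (Rpower (INR n) a) by (field; lra).
  apply Rle_Rpower; [apply (le_INR 1); lia | unfold a; lra].
Qed.

Lemma ln_ln2_bounds : -1 <= ln (ln 2) <= 0.
Proof.
  pose proof ln_lt_2. pose proof (ln_le_sub1 2 ltac:(lra)).
  split.
  - pose proof (ln_le_mono (/ 2) (ln 2) ltac:(lra) ltac:(lra)).
    rewrite ln_Rinv in * by lra. lra.
  - rewrite <- ln_1. apply ln_le_mono; lra.
Qed.

Lemma loglog_estimates eps : 0 < eps ->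
  exists N0, forall j, (N0 <= j)%nat ->
    0 < ln (INR j * ln 2) /\ ln ((2 + eps) * ln (INR j * ln 2)) <= INR j /\
    (1 + eps / 4) * ln (INR j + 1) <= (2 + eps) * ln (INR j * ln 2) / 2.
Proof.
  intro heps.
  assert (h8 : 0 < 8 / eps) by (apply Rdiv_lt_0_compat; lra).
  pose proof (Rmax_l (8 / eps + 3) (ln (2 + eps))) as hLb1.
  pose proof (Rmax_r (8 / eps + 3) (ln (2 + eps))) as hLb2.
  set (Lb := Rmax (8 / eps + 3) (ln (2 + eps))) in *.
  destruct (nat_large (exp Lb)) as [N0 hN0]. exists N0. intros j hj.
  specialize (hN0 j hj).
  assert (hj0 : 0 < INR j) by (pose proof (exp_pos Lb); lra).
  set (L := ln (INR j)).
  assert (hL : Lb < L) by (unfold L; rewrite <- (ln_exp Lb); apply ln_increasing; auto; apply exp_pos).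
  assert (hjL : 1 + L + L * L / 4 <= INR j).
  { pose proof (exp_ge_quadratic L ltac:(lra)).
    unfold L in *. rewrite exp_ln in * by auto. lra. }
  pose proof ln_ln2_bounds. pose proof ln_lt_2.
  assert (hell : ln (INR j * ln 2) = L + ln (ln 2)) by (unfold L; apply ln_mult; lra).
  assert (hell0 : 0 < ln (INR j * ln 2)) by lra.
  repeat split; auto.
  - rewrite ln_mult by lra.
    pose proof (ln_le_sub1 _ hell0). pose proof (pow2_ge_0 (L / 2 - 1)). nra.
  - assert (hlog : ln (INR j + 1) <= 1 + L).
    { assert (ln (INR j + 1) <= ln (2 * INR j)) by (apply ln_le_mono; nra).
      rewrite ln_mult in H1 by lra. pose proof (ln_le_sub1 2 ltac:(lra)). unfold L. lra. }
    assert (eps * L >= 8 + 3 * eps).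
    { assert (8 / eps + 3 < L) by lra. apply (Rmult_lt_compat_l eps) in H1; [| lra].
      replace (eps * (8 / eps + 3)) with (8 + 3 * eps) in H1 by (field; lra). lra. }
    assert (0 <= ln (INR j + 1)) by (rewrite <- ln_1; apply ln_le_mono; lra).
    nra.
Qed.

Lemma dyadic_log_bounds n : (0 < n)%nat ->
  INR (Nat.log2 n) * ln 2 <= ln (INR n) <= (INR (Nat.log2 n) + 1) * ln 2.
Proof.
  intro hn. destruct (Nat.log2_spec n hn) as [hlo hhi].
  assert (hpow : forall k, 2 ^ k = INR (Nat.pow 2 k))
    by (intro k; rewrite pow_INR; reflexivity).
  assert (hn0 : 0 < INR n) by (apply lt_0_INR; lia).
  rewrite <- S_INR, <- !ln_pow, !hpow by lra.
  pose proof (Nat.pow_nonzero 2 (Nat.log2 n) ltac:(lia)).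
  split; apply ln_le_mono; try apply le_INR; try apply lt_0_INR; lia.
Qed.

(* 2^(-(j+1)/(2 gamma)) ((2 + eps) ln (j ln 2))^(1/(2 d gamma)), the threshold
   used on the dyadic block 2^j <= n < 2^(j+1). *)
Definition dyadic_threshold (d gamma eps : R) (j : nat) : R :=
  exp (- ((INR j + 1) * ln 2) / (2 * gamma) + ln ((2 + eps) * ln (INR j * ln 2)) / (2 * d * gamma)).

Lemma dyadic_threshold_mean d' F gamma eps j :
  (1 <= d')%nat -> 0 < gamma -> 0 < eps -> (forall a, 0 < a <= 1 -> F a = Rpower a gamma) ->
  0 < ln (INR j * ln 2) -> ln ((2 + eps) * ln (INR j * ln 2)) <= INR j ->
  (2 + eps) * ln (INR j * ln 2) / 2
  <= F (dyadic_threshold (INR (S d')) gamma eps j) ^ (2 * S d')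
     * INR (length (even_sites d' (Nat.pow 2 j))).
Proof.
  intros hd' hg heps hF hell hell_j.
  set (d := INR (S d')).
  assert (hd : 2 <= d) by (apply (le_INR 2); lia).
  pose proof ln_lt_2.
  set (ell := ln (INR j * ln 2)) in *.
  set (t := dyadic_threshold d gamma eps j).
  assert (hlnt : ln t = - ((INR j + 1) * ln 2) / (2 * gamma) + ln ((2 + eps) * ell) / (2 * d * gamma))
    by apply ln_exp.
  assert (ht1 : t <= 1).
  { unfold t, dyadic_threshold. fold ell. rewrite <- exp_0 at 2. apply exp_le.
    apply (Rmult_le_reg_l (2 * d * gamma)); [nra |].
    replace (2 * d * gamma * (- ((INR j + 1) * ln 2) / (2 * gamma) + ln ((2 + eps) * ell) / (2 * d * gamma)))
      with (ln ((2 + eps) * ell) - (INR j + 1) * (d * ln 2)) by (field; lra).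
    assert (1 <= d * ln 2) by nra.
    assert ((INR j + 1) * 1 <= (INR j + 1) * (d * ln 2))
      by (apply Rmult_le_compat_l; [pose proof (pos_INR j) |]; lra).
    lra. }
  assert (hFt : 1 * exp (gamma * ln t) <= F t).
  { rewrite hF by (split; [apply exp_pos | exact ht1]). unfold Rpower. lra. }
  eapply Rle_trans; [| apply (mean_good_stars_ge d' F 1 gamma t _ ltac:(lra) (exp_pos _));
                       [apply Nat.le_succ_l, Nat.neq_0_lt_0, Nat.pow_nonzero; lia | exact hFt]].
  rewrite pow_INR. replace (INR 2) with 2 by (simpl; ring).
  rewrite ln_pow, ln_1, hlnt by lra. fold d.
  replace (2 * d * (0 + gamma * (- ((INR j + 1) * ln 2) / (2 * gamma)
             + ln ((2 + eps) * ell) / (2 * d * gamma)))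
           + (INR d' * ln 2 + d * (INR j * ln 2)))
    with (ln ((2 + eps) * ell) + - ln 2)
    by (unfold d in *; rewrite S_INR in *; field; split; lra).
  rewrite exp_plus, exp_Ropp, !exp_ln by nra. lra.
Qed.

Lemma dyadic_threshold_le d gamma eps (j n : nat) :
  0 < d -> 0 < gamma -> 0 < eps -> (1 <= j)%nat -> 0 < ln (INR j * ln 2) ->
  Nat.log2 n = j -> (0 < n)%nat ->
  dyadic_threshold d gamma eps j
  <= Rpower (INR n) (- (1 / (2 * gamma))) * Rpower ((2 + eps) * ln (ln (INR n))) (1 / (2 * d * gamma)).
Proof.
  intros hd hg heps hj1 hell hj hn.
  destruct (dyadic_log_bounds n hn) as [hlo hhi]. rewrite hj in hlo, hhi.
  pose proof ln_lt_2.
  unfold dyadic_threshold. rewrite exp_plus. unfold Rpower.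
  apply Rmult_le_compat; try apply Rlt_le, exp_pos.
  - apply exp_le.
    replace (- ((INR j + 1) * ln 2) / (2 * gamma))
      with (- (1 / (2 * gamma)) * ((INR j + 1) * ln 2)) by (field; lra).
    apply Rmult_le_compat_neg_l; [| exact hhi].
    assert (0 < 1 / (2 * gamma)) by (apply Rdiv_lt_0_compat; lra). lra.
  - apply exp_le.
    replace (ln ((2 + eps) * ln (INR j * ln 2)) / (2 * d * gamma))
      with (1 / (2 * d * gamma) * ln ((2 + eps) * ln (INR j * ln 2))) by (field; lra).
    apply Rmult_le_compat_l; [apply Rlt_le, Rdiv_lt_0_compat; nra |].
    apply ln_le_mono; [nra |]. apply Rmult_le_compat_l; [lra |].
    apply ln_le_mono; [| exact hlo].
    apply Rmult_lt_0_compat; [apply lt_0_INR; lia | lra].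
Qed.

Lemma lambda1_le_power_law d' P W F gamma eps :
  (1 <= d')%nat -> iid_conductances (S d') P W F -> 0 < gamma ->
  (forall a, 0 < a <= 1 -> F a = Rpower a gamma) -> 0 < eps ->
  almost_surely P (fun o => exists N : nat, forall n : nat, (N <= n)%nat ->
    lambda1_le (S d') n (fun x i => W x i o)
      (2 * INR (S d') * Rpower (INR n) (- (1 / (2 * gamma)))
         * Rpower ((2 + eps) * ln (ln (INR n))) (1 / (2 * INR (S d') * gamma)))).
Proof.
  intros hd' HW hg hF heps.
  set (d := INR (S d')).
  destruct (loglog_estimates eps heps) as [N1 hN1].
  set (N0 := Nat.max N1 1).
  assert (hmean : forall j, (N0 <= j)%nat ->
     (1 + eps / 4) * ln (INR j + 1)
     <= F (dyadic_threshold d gamma eps j) ^ (2 * S d') * INR (length (even_sites d' (Nat.pow 2 j)))).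
  { intros j hj. destruct (hN1 j ltac:(lia)) as [hell [hell_j hmean]].
    eapply Rle_trans; [exact hmean | apply dyadic_threshold_mean; auto]. }
  destruct (eventually_lambda1_le d' P W F HW _ (fun j => Nat.pow 2 j) (eps / 4) N0 ltac:(lra) hmean)
    as [E [hE [hPE hEK]]].
  exists E. split; [exact hE | split; [exact hPE |]].
  intros o ho. destruct (hEK o ho) as [K hK]. exists (Nat.pow 2 (Nat.max K N0)). intros n hn.
  assert (hn0 : (0 < n)%nat) by (pose proof (Nat.pow_nonzero 2 (Nat.max K N0) ltac:(lia)); lia).
  set (j := Nat.log2 n).
  assert (hj : (Nat.max K N0 <= j)%nat).
  { unfold j. rewrite <- (Nat.log2_pow2 (Nat.max K N0)) by lia. apply Nat.log2_le_mono; auto. }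
  eapply lambda1_le_mono; [apply (hK j ltac:(lia) n (proj1 (Nat.log2_spec n hn0))) |].
  rewrite (Rmult_assoc (2 * d) (Rpower (INR n) _)).
  apply Rmult_le_compat_l; [apply Rmult_le_pos; [lra | apply pos_INR] |].
  destruct (hN1 j ltac:(lia)) as [hell _].
  apply dyadic_threshold_le; auto; [apply lt_0_INR; lia | lia].
Qed.

Theorem corollary1p2 :
  forall (d : nat) (P : prob_space) (W : pt -> nat -> Omega P -> R)
         (F : R -> R) (gamma : R),
    (2 <= d)%nat ->
    iid_conductances d P W F ->
    0 < gamma ->
    regularly_varying_at_0 F gamma ->
    (forall delta, 0 < delta ->
       almost_surely P (fun o => exists N : nat, forall n : nat, (N <= n)%nat ->
         lambda1_le d n (fun x i => W x i o)
           (Rpower (INR n) (- (1 / (2 * gamma)) + delta))))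
    /\
    ((F 0 = 0 /\ forall a, 0 < a <= 1 -> F a = Rpower a gamma) ->
     forall eps, 0 < eps ->
       almost_surely P (fun o => exists N : nat, forall n : nat, (N <= n)%nat ->
         lambda1_le d n (fun x i => W x i o)
           (2 * INR d * Rpower (INR n) (- (1 / (2 * gamma)))
              * Rpower ((2 + eps) * ln (ln (INR n))) (1 / (2 * INR d * gamma))))).
Proof.
  intros d P W F gamma hd HW hg hreg.
  destruct d as [|d']; [lia |].
  split.
  - intros delta hdelta. apply (lambda1_le_regularly_varying d' P W F gamma delta); auto.
  - intros [_ hF] eps heps. apply (lambda1_le_power_law d' P W F gamma eps); auto; lia.
Qed.
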